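(* Let $\Bbbk$ be a commutative ring, $I$ a category and $(X,\eta,\theta)\colon I\to\Bbbk\text{-}\mathbf{Cat}$ an oplax functor. For each $i\in I_0$ let $Y(i)$ be a small $\Bbbk$-category and $L_i\colon X(i)\to Y(i)$ a left adjoint of $R_i\colon Y(i)\to X(i)$ with unit $\varepsilon_i\colon\mathrm{id}_{X(i)}\Rightarrow R_iL_i$ and counit $\zeta_i\colon L_iR_i\Rightarrow\mathrm{id}_{Y(i)}$. Define $Y(a):=L_jX(a)R_i\colon Y(i)\to Y(j)$ for $a\colon i\to j$; $\eta'_i:=\zeta_i\circ L_i\eta_iR_i\colon Y(\mathrm{id}_i)\Rightarrow\mathrm{id}_{Y(i)}$; and for $i\xrightarrow{a}j\xrightarrow{b}k$, $\theta'_{b,a}:=L_kX(b)\varepsilon_jX(a)R_i\circ L_k\theta_{b,a}R_i\colon Y(ba)\Rightarrow Y(b)Y(a)$. Then: (1) $(Y,\eta',\theta')$ is an oplax functor $I\to\Bbbk\text{-}\mathbf{Cat}$; (2) setting $R(i):=R_i$ and $\phi^R(a):=\varepsilon_jX(a)R_i$ for $a\colon i\to j$, $(R,\phi^R)\colon Y\to X$ is a $1$-morphism in $\overleftarrow{\operatorname{Oplax}}(I,\Bbbk\text{-}\mathbf{Cat})$; (3) if moreover every $\varepsilon_i$ is an isomorphism, then (a) $\phi^R(a)$ is an isomorphism for every morphism $a$ of $I$, and (b) setting $L(i):=L_i$ and $\phi^L(a):=L_jX(a)\varepsilon_i^{-1}$ for $a\colon i\to j$, $(L,\phi^L)\colon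 X\to Y$ is a $1$-morphism in $\overleftarrow{\operatorname{Oplax}}(I,\Bbbk\text{-}\mathbf{Cat})$ with all $\phi^L(a)$ isomorphisms.
   Context: An oplax functor $(X,\eta,\theta)\colon I\to\mathbf{C}$ into a 2-category consists of objects $X(i)$, 1-morphisms $X(a)\colon X(i)\to X(j)$, 2-morphisms $\eta_i\colon X(\mathrm{id}_i)\Rightarrow\mathrm{id}_{X(i)}$ and $\theta_{b,a}\colon X(ba)\Rightarrow X(b)X(a)$ with $X(a)\eta_i\circ\theta_{a,\mathrm{id}_i}=\mathrm{id}_{X(a)}$, $\eta_jX(a)\circ\theta_{\mathrm{id}_j,a}=\mathrm{id}_{X(a)}$, and $X(c)\theta_{b,a}\circ\theta_{c,ba}=\theta_{c,b}X(a)\circ\theta_{cb,a}$. $\overleftarrow{\operatorname{Oplax}}(I,\mathbf{C})$ is the 2-category of oplax functors $I\to\mathbf{C}$, where a 1-morphism $(F,\psi)\colon(X,\eta,\theta)\to(X',\eta',\theta')$ consists of 1-morphisms $F(i)\colon X(i)\to X'(i)$ and 2-morphisms $\psi(a)\colon X'(a)F(i)\Rightarrow F(j)X(a)$ ($a\colon i\to j$) with $F(i)\eta_i\circ\psi(\mathrm{id}_i)=\eta'_iF(i)$ and $F(k)\theta_{b,a}\circ\psi(ba)=\psi(b)X(a)\circ X'(b)\psi(a)\circ\theta'_{b,a}F(i)$. *)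

From HB Require Import structures.
From mathcomp Require Import all_boot all_algebra.
Set Implicit Arguments. Unset Strict Implicit. Unset Printing Implicit Defensive.
Import GRing.Theory.
Local Open Scope ring_scope.

Record Cat := {
  cob :> Type;
  chom : cob -> cob -> Type;
  ccomp : forall i j l, chom j l -> chom i j -> chom i l;
  cid : forall i, chom i i;
  ccompA : forall i j l m (h : chom l m) (g : chom j l) (f : chom i j),
    ccomp h (ccomp g f) = ccomp (ccomp h g) f;
  ccomp1r : forall i j (f : chom i j), ccomp f (cid i) = f;
  ccomp1l : forall i j (f : chom i j), ccomp (cid j) f = f }.
Arguments ccomp {c i j l}. Arguments cid {c}.

Record kCat (k : comPzRingType) := {
  kob :> Type;
  khom : kob -> kob -> lmodType k;
  kcomp : forall x y z, khom y z -> khom x y -> khom x z;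
  kid : forall x, khom x x;
  kcompA : forall x y z w (h : khom z w) (g : khom y z) (f : khom x y),
    kcomp h (kcomp g f) = kcomp (kcomp h g) f;
  kcomp1r : forall x y (f : khom x y), kcomp f (kid x) = f;
  kcomp1l : forall x y (f : khom x y), kcomp (kid y) f = f;
  kcomp_linl : forall x y z (a : k) (g1 g2 : khom y z) (f : khom x y),
    kcomp (a *: g1 + g2) f = a *: kcomp g1 f + kcomp g2 f;
  kcomp_linr : forall x y z (a : k) (g : khom y z) (f1 f2 : khom x y),
    kcomp g (a *: f1 + f2) = a *: kcomp g f1 + kcomp g f2 }.
Arguments kcomp {_ _ _ _ _}. Arguments kid {_ _}. Arguments khom {_}.

Section KFun.
Context {k : comPzRingType}.

Record kFunctor (C D : kCat k) := {
  fobj :> C -> D;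
  fmap : forall x y, khom C x y -> khom D (fobj x) (fobj y);
  fmap_comp : forall x y z (g : khom C y z) (f : khom C x y),
    fmap (kcomp g f) = kcomp (fmap g) (fmap f);
  fmap_id : forall x, fmap (kid x) = kid (fobj x);
  fmap_lin : forall x y (a : k) (f g : khom C x y),
    fmap (a *: f + g) = a *: fmap f + fmap g }.
Arguments fmap {C D _ x y}.

Definition kFid (C : kCat k) : kFunctor C C.
Proof.
refine (@Build_kFunctor C C (fun x => x) (fun x y f => f) _ _ _); by [].
Defined.

Definition kFcomp (C D E : kCat k) (G : kFunctor D E) (F : kFunctor C D)
  : kFunctor C E.
Proof.
refine (@Build_kFunctor C E (fun x => G (F x)) (fun x y f => fmap (fmap f)) _ _ _).
- by move=> x y z g f; rewrite !fmap_comp.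
- by move=> x; rewrite !fmap_id.
- by move=> x y a f g; rewrite !fmap_lin.
Defined.

Definition nt_data (C D : kCat k) (F G : kFunctor C D) :=
  forall x : C, khom D (F x) (G x).

Definition natural (C D : kCat k) (F G : kFunctor C D) (t : nt_data F G) : Prop :=
  forall x y (f : khom C x y), kcomp (fmap f) (t x) = kcomp (t y) (fmap f).

Definition nt_inverse (C D : kCat k) (F G : kFunctor C D)
  (t : nt_data F G) (s : nt_data G F) : Prop :=
  (forall x, kcomp (s x) (t x) = kid (F x)) /\ (forall x, kcomp (t x) (s x) = kid (G x)).

Definition nt_iso (C D : kCat k) (F G : kFunctor C D) (t : nt_data F G) : Prop :=
  exists s : nt_data G F, natural s /\ nt_inverse t s.

Definition eq_nt (T : Type) (C D : kCat k) (M : T -> kFunctor C D) (f g : T)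
  (p : f = g) : nt_data (M f) (M g) :=
  fun x => match p in _ = h return khom D (M f x) (M h x) with
           | erefl => kid (M f x) end.

Definition is_adjunction (C D : kCat k) (L : kFunctor C D) (R : kFunctor D C)
  (eps : nt_data (kFid C) (kFcomp R L)) (zeta : nt_data (kFcomp L R) (kFid D)) : Prop :=
  [/\ natural eps, natural zeta,
      (forall x : C, kcomp (zeta (L x)) (fmap (eps x)) = kid (L x)) &
      (forall y : D, kcomp (fmap (zeta y)) (eps (R y)) = kid (R y))].

End KFun.
Arguments fmap {k C D _ x y}.

Section Oplax.
Context {k : comPzRingType} {I : Cat}.

Definition is_oplax (Xo : I -> kCat k)
  (Xm : forall i j : I, chom i j -> kFunctor (Xo i) (Xo j))
  (eta : forall i, nt_data (Xm i i (cid i)) (kFid (Xo i)))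
  (theta : forall (i j l : I) (a : chom i j) (b : chom j l),
      nt_data (Xm i l (ccomp b a)) (kFcomp (Xm j l b) (Xm i j a))) : Prop :=
  [/\ (forall i, natural (eta i)),
      (forall i j l a b, natural (theta i j l a b)),
      (forall i j (a : chom i j) x,
         kcomp (fmap (eta i x)) (theta i i j (cid i) a x)
         = eq_nt (Xm i j) (ccomp1r a) x),
      (forall i j (a : chom i j) x,
         kcomp (eta j (Xm i j a x)) (theta i j j a (cid j) x)
         = eq_nt (Xm i j) (ccomp1l a) x) &
      (forall i j l m (a : chom i j) (b : chom j l) (c : chom l m) x,
         kcomp (fmap (theta i j l a b x)) (theta i l m (ccomp b a) c x)
         = kcomp (kcomp (theta j l m b c (Xm i j a x)) (theta i j m a (ccomp c b) x))
                 (eq_nt (Xm i m) (ccompA c b a) x))].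

(* (F, psi) : (X, eta, theta) -> (X', eta', theta') is a 1-morphism of
   Oplax(I, k-Cat) (the left-pointing variant of the paper) *)
Definition is_oplax_mor (Xo Xo' : I -> kCat k)
  (Xm : forall i j : I, chom i j -> kFunctor (Xo i) (Xo j))
  (eta : forall i, nt_data (Xm i i (cid i)) (kFid (Xo i)))
  (theta : forall (i j l : I) (a : chom i j) (b : chom j l),
      nt_data (Xm i l (ccomp b a)) (kFcomp (Xm j l b) (Xm i j a)))
  (Xm' : forall i j : I, chom i j -> kFunctor (Xo' i) (Xo' j))
  (eta' : forall i, nt_data (Xm' i i (cid i)) (kFid (Xo' i)))
  (theta' : forall (i j l : I) (a : chom i j) (b : chom j l),
      nt_data (Xm' i l (ccomp b a)) (kFcomp (Xm' j l b) (Xm' i j a)))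
  (F : forall i, kFunctor (Xo i) (Xo' i))
  (psi : forall (i j : I) (a : chom i j),
      nt_data (kFcomp (Xm' i j a) (F i)) (kFcomp (F j) (Xm i j a))) : Prop :=
  [/\ (forall i j a, natural (psi i j a)),
      (forall i x, kcomp (fmap (eta i x)) (psi i i (cid i) x) = eta' i (F i x)) &
      (forall i j l (a : chom i j) (b : chom j l) x,
         kcomp (fmap (theta i j l a b x)) (psi i l (ccomp b a) x)
         = kcomp (psi j l b (Xm i j a x))
             (kcomp (fmap (psi i j a x)) (theta' i j l a b (F i x))))].

Unset Implicit Arguments.
Section Transfer.
Context (Xo Yo : I -> kCat k)
  (Xm : forall i j : I, chom i j -> kFunctor (Xo i) (Xo j))
  (eta : forall i, nt_data (Xm i i (cid i)) (kFid (Xo i)))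
  (theta : forall (i j l : I) (a : chom i j) (b : chom j l),
      nt_data (Xm i l (ccomp b a)) (kFcomp (Xm j l b) (Xm i j a)))
  (L : forall i, kFunctor (Xo i) (Yo i)) (R : forall i, kFunctor (Yo i) (Xo i))
  (eps : forall i, nt_data (kFid (Xo i)) (kFcomp (R i) (L i)))
  (zeta : forall i, nt_data (kFcomp (L i) (R i)) (kFid (Yo i))).

Definition Ym (i j : I) (a : chom i j) : kFunctor (Yo i) (Yo j) :=
  kFcomp (L j) (kFcomp (Xm i j a) (R i)).

Definition Yeta (i : I) : nt_data (Ym i i (cid i)) (kFid (Yo i)) :=
  fun y => kcomp (zeta i y) (fmap (eta i (R i y))).

Definition Ytheta (i j l : I) (a : chom i j) (b : chom j l)
  : nt_data (Ym i l (ccomp b a)) (kFcomp (Ym j l b) (Ym i j a)) :=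
  fun y => kcomp (fmap (fmap (eps j (Xm i j a (R i y)))) : khom _ (L l _) _)
                 (fmap (theta i j l a b (R i y))).

Definition phiR (i j : I) (a : chom i j)
  : nt_data (kFcomp (Xm i j a) (R i)) (kFcomp (R j) (Ym i j a)) :=
  fun y => eps j (Xm i j a (R i y)).

Definition phiL (epsinv : forall i, nt_data (kFcomp (R i) (L i)) (kFid (Xo i)))
  (i j : I) (a : chom i j)
  : nt_data (kFcomp (Ym i j a) (L i)) (kFcomp (L j) (Xm i j a)) :=
  fun x => fmap (fmap (epsinv i x) : khom _ (Xm i j a _) _).

End Transfer.
End Oplax.
Arguments is_oplax {k I} Xo Xm eta theta.
Arguments is_oplax_mor {k I} Xo Xo' Xm eta theta Xm' eta' theta' F psi.
Arguments is_adjunction {k C D} L R eps zeta.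

(* Each coherence axiom of (Y, eta', theta') follows from the corresponding
   axiom of X once units and counits are moved across functors by naturality;
   the unit laws use in addition one triangle identity each.  The unit
   inserted into theta' is precisely phi^R, so (R, phi^R) is a 1-morphism by
   naturality of the unit alone.  When the units are invertible, L_i applied to
   eps_i^-1 is the counit at L_i, which turns the unit axiom of (L, phi^L) into
   that of eta'; phi^R and phi^L are whiskerings of eps and eps^-1, hence
   invertible. *)
From HB Require Import structures.
From mathcomp Require Import all_boot all_algebra.

Set Implicit Arguments.
Unset Strict Implicit.
Unset Printing Implicit Defensive.

Section NaturalIso.
Variable k : comPzRingType.

Lemma eq_nt_whisker (T : Type) (B C D E : kCat k) (F : kFunctor B C)
    (G : kFunctor D E) (M : T -> kFunctor C D) (f g : T) (p : f = g) y :
  eq_nt (fun t => kFcomp G (kFcomp (M t) F)) p y = fmap (eq_nt M p (F y)).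
Proof. by case: g / p; rewrite /eq_nt fmap_id. Qed.

Lemma natural_inverse (C D : kCat k) (F G : kFunctor C D)
    (t : nt_data F G) (s : nt_data G F) :
  natural t -> nt_inverse t s -> natural s.
Proof.
move=> tN [st ts] x y f.
rewrite -[RHS]kcomp1r -(ts x) kcompA -(kcompA (s y)) tN.
by rewrite kcompA st kcomp1l.
Qed.

Lemma nt_iso_inverse (C D : kCat k) (F G : kFunctor C D)
    (t : nt_data F G) (s : nt_data G F) :
  natural t -> nt_inverse t s -> nt_iso s.
Proof. by move=> tN [st ts]; exists t. Qed.

Lemma nt_iso_whiskerr (B C D : kCat k) (F G : kFunctor C D) (H : kFunctor B C)
    (t : nt_data F G) :
  nt_iso t -> @nt_iso _ _ _ (kFcomp F H) (kFcomp G H) (fun y => t (H y)).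
Proof.
case=> s [sN [st ts]]; exists (fun y => s (H y)).
by split=> [x y f|]; [apply: sN | split=> y; [apply: st | apply: ts]].
Qed.

Lemma nt_iso_whiskerl (C D E : kCat k) (F G : kFunctor C D) (H : kFunctor D E)
    (t : nt_data F G) :
  nt_iso t -> @nt_iso _ _ _ (kFcomp H F) (kFcomp H G) (fun x => fmap (t x)).
Proof.
case=> s [sN [st ts]]; exists (fun x => fmap (s x)); split.
  by move=> x y f; rewrite /= -!fmap_comp sN.
by split=> x /=; rewrite -fmap_comp ?st ?ts fmap_id.
Qed.

End NaturalIso.

Section Adjunction.
Variables (k : comPzRingType) (C D : kCat k).
Variables (L : kFunctor C D) (R : kFunctor D C).
Variables (eps : nt_data (kFid C) (kFcomp R L)) (zeta : nt_data (kFcomp L R) (kFid D)).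
Hypothesis adj : is_adjunction L R eps zeta.

Lemma adj_unit_nat x y (f : khom C x y) :
  kcomp (fmap (fmap f : khom D _ _)) (eps x) = kcomp (eps y) f.
Proof. by case: adj => epsN _ _ _; apply: epsN. Qed.

Lemma adj_counit_nat x y (f : khom D x y) :
  kcomp f (zeta x) = kcomp (zeta y) (fmap (fmap f : khom C _ _)).
Proof. by case: adj => _ zetaN _ _; apply: zetaN. Qed.

Lemma adj_triangleL x : kcomp (zeta (L x)) (fmap (eps x)) = kid (L x).
Proof. by case: adj. Qed.

Lemma adj_triangleR y : kcomp (fmap (zeta y)) (eps (R y)) = kid (R y).
Proof. by case: adj. Qed.

Lemma adj_unit_inv_counit (epsinv : nt_data (kFcomp R L) (kFid C)) :
  nt_inverse eps epsinv -> forall x, fmap (epsinv x : khom C _ _) = zeta (L x).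
Proof.
move=> [_ eps_epsinv] x.
rewrite -[LHS]kcomp1l -(adj_triangleL x) -kcompA -fmap_comp.
by rewrite eps_epsinv fmap_id kcomp1r.
Qed.

End Adjunction.

Section Transfer.
Unset Implicit Arguments.
Variables (k : comPzRingType) (I : Cat) (Xo Yo : I -> kCat k).
Variable Xm : forall i j : I, chom i j -> kFunctor (Xo i) (Xo j).
Variable eta : forall i : I, nt_data (Xm i i (cid i)) (kFid (Xo i)).
Variable theta : forall (i j l : I) (a : chom i j) (b : chom j l),
  nt_data (Xm i l (ccomp b a)) (kFcomp (Xm j l b) (Xm i j a)).
Hypothesis HX : is_oplax Xo Xm eta theta.
Variables (L : forall i : I, kFunctor (Xo i) (Yo i)) (R : forall i : I, kFunctor (Yo i) (Xo i)).
Variable eps : forall i : I, nt_data (kFid (Xo i)) (kFcomp (R i) (L i)).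
Variable zeta : forall i : I, nt_data (kFcomp (L i) (R i)) (kFid (Yo i)).
Hypothesis Hadj : forall i : I, is_adjunction (L i) (R i) (eps i) (zeta i).

Local Notation Y := (Ym Xo Yo Xm L R).
Local Notation Yeta' := (Yeta Xo Yo Xm eta L R zeta).
Local Notation Ytheta' := (Ytheta Xo Yo Xm theta L R eps).

Let unit_natural i : natural (eps i). Proof. by case: (Hadj i). Qed.
Let unit_nat i := adj_unit_nat (Hadj i).
Let counit_nat i := adj_counit_nat (Hadj i).
Let triangleL i := adj_triangleL (Hadj i).
Let triangleR i := adj_triangleR (Hadj i).

Lemma oplax_eta_nat i x y (f : khom (Xo i) x y) :
  kcomp f (eta i x) = kcomp (eta i y) (fmap f).
Proof. by case: HX => etaN _ _ _ _; apply: etaN. Qed.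

Lemma oplax_theta_nat i j l (a : chom i j) (b : chom j l) x y (f : khom (Xo i) x y) :
  kcomp (fmap (fmap f : khom (Xo j) _ _)) (theta i j l a b x)
  = kcomp (theta i j l a b y) (fmap f).
Proof. by case: HX => _ thetaN _ _ _; apply: thetaN. Qed.

Lemma transfer_oplax : is_oplax Yo Y Yeta' Ytheta'.
Proof.
case: HX => _ _ unitr unitl assoc; split.
- move=> i x y f; rewrite /Yeta /= kcompA counit_nat -!kcompA -!fmap_comp.
  by rewrite oplax_eta_nat.
- move=> i j l a b x y f; rewrite /Ytheta /= kcompA -!fmap_comp unit_nat.
  by rewrite (@fmap_comp _ _ _ (Xm j l b)) -kcompA oplax_theta_nat kcompA.
- move=> i j a y; rewrite /Yeta /Ytheta /= eq_nt_whisker -unitr.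
  rewrite kcompA -!fmap_comp; congr (fmap (kcomp (fmap _) _)).
  by rewrite fmap_comp -kcompA unit_nat kcompA triangleR kcomp1l.
- move=> i j a y; rewrite /Yeta /Ytheta /= eq_nt_whisker -unitl.
  rewrite -!kcompA (kcompA (fmap (eta _ _))) -fmap_comp -oplax_eta_nat.
  by rewrite fmap_comp !kcompA triangleL kcomp1l fmap_comp.
- move=> i j l m a b c y; rewrite /Ytheta /= eq_nt_whisker !kcompA -!fmap_comp.
  congr fmap.
  rewrite -(kcompA (fmap (eps l _))) -oplax_theta_nat -!kcompA.
  rewrite (kcompA (theta j l m _ _ _)) -assoc unit_nat.
  by rewrite !(@fmap_comp _ _ _ (Xm l m c)) -!kcompA.
Qed.

Lemma transfer_oplax_morR :
  is_oplax_mor Yo Xo Y Yeta' Ytheta' Xm eta theta R (phiR Xo Yo Xm L R eps).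
Proof.
split.
- by move=> i j a x y f; rewrite /phiR /= unit_nat.
- by move=> i x; rewrite /phiR /Yeta /= fmap_comp -kcompA unit_nat kcompA triangleR kcomp1l.
- by move=> i j l a b x; rewrite /phiR /Ytheta /= -(@fmap_comp _ _ _ (L l)) unit_nat.
Qed.

Lemma phiR_iso : (forall i, nt_iso (eps i)) ->
  forall i j (a : chom i j), nt_iso (phiR Xo Yo Xm L R eps i j a).
Proof.
move=> eps_iso i j a.
exact (nt_iso_whiskerr (kFcomp (Xm i j a) (R i)) (eps_iso j)).
Qed.

Section InvertibleUnit.
Variable epsinv : forall i : I, nt_data (kFcomp (R i) (L i)) (kFid (Xo i)).
Hypothesis Hinv : forall i : I, nt_inverse (eps i) (epsinv i).

Let epsinv_nat i x y (f : khom (Xo i) x y) :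
  kcomp f (epsinv i x) = kcomp (epsinv i y) (fmap (fmap f : khom (Yo i) _ _)).
Proof. exact (natural_inverse (unit_natural i) (Hinv i) f). Qed.

Lemma transfer_oplax_morL :
  is_oplax_mor Xo Yo Xm eta theta Y Yeta' Ytheta' L (phiL Xo Yo Xm L R epsinv).
Proof.
have epsinv_eps i x : kcomp (epsinv i x) (eps i x) = kid x by case: (Hinv i).
split.
- by move=> i j a x y f; rewrite /phiL /= -!fmap_comp epsinv_nat.
- move=> i x; rewrite /phiL /Yeta /= -fmap_comp -oplax_eta_nat fmap_comp.
  by rewrite (adj_unit_inv_counit (Hadj i) (Hinv i)).
- move=> i j l a b x; rewrite /phiL /Ytheta /= !kcompA -!fmap_comp -epsinv_nat.
  by rewrite -kcompA epsinv_eps kcomp1r -oplax_theta_nat.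
Qed.

Lemma phiL_iso i j (a : chom i j) : nt_iso (phiL Xo Yo Xm L R epsinv i j a).
Proof.
exact (nt_iso_whiskerl (kFcomp (L j) (Xm i j a))
         (nt_iso_inverse (unit_natural i) (Hinv i))).
Qed.

End InvertibleUnit.
End Transfer.

Theorem lemma4p8 (k : comPzRingType) (I : Cat)
  (Xo : I -> kCat k)
  (Xm : forall i j : I, chom i j -> kFunctor (Xo i) (Xo j))
  (eta : forall i : I, nt_data (Xm i i (cid i)) (kFid (Xo i)))
  (theta : forall (i j l : I) (a : chom i j) (b : chom j l),
      nt_data (Xm i l (ccomp b a)) (kFcomp (Xm j l b) (Xm i j a)))
  (HX : is_oplax Xo Xm eta theta)
  (Yo : I -> kCat k)
  (L : forall i : I, kFunctor (Xo i) (Yo i))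
  (R : forall i : I, kFunctor (Yo i) (Xo i))
  (eps : forall i : I, nt_data (kFid (Xo i)) (kFcomp (R i) (L i)))
  (zeta : forall i : I, nt_data (kFcomp (L i) (R i)) (kFid (Yo i)))
  (Hadj : forall i : I, is_adjunction (L i) (R i) (eps i) (zeta i)) :
  is_oplax Yo (Ym Xo Yo Xm L R) (Yeta Xo Yo Xm eta L R zeta)
    (Ytheta Xo Yo Xm theta L R eps) /\
  is_oplax_mor Yo Xo (Ym Xo Yo Xm L R) (Yeta Xo Yo Xm eta L R zeta)
    (Ytheta Xo Yo Xm theta L R eps) Xm eta theta R (phiR Xo Yo Xm L R eps) /\
  ((forall i : I, nt_iso (eps i)) ->
     (forall (i j : I) (a : chom i j), nt_iso (phiR Xo Yo Xm L R eps i j a)) /\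
     (forall epsinv : forall i : I, nt_data (kFcomp (R i) (L i)) (kFid (Xo i)),
        (forall i : I, nt_inverse (eps i) (epsinv i)) ->
        is_oplax_mor Xo Yo Xm eta theta (Ym Xo Yo Xm L R)
          (Yeta Xo Yo Xm eta L R zeta) (Ytheta Xo Yo Xm theta L R eps)
          L (phiL Xo Yo Xm L R epsinv) /\
        (forall (i j : I) (a : chom i j),
           nt_iso (phiL Xo Yo Xm L R epsinv i j a)))).
Proof.
split; first exact: transfer_oplax.
split; first exact: transfer_oplax_morR.
move=> eps_iso; split; first exact: phiR_iso.
move=> epsinv Hinv; split; first exact: transfer_oplax_morL.
exact: phiL_iso.
Qed.
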